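(* For every integer $r\ge4$, \[ f_r(r+1,r)=\rho_r\big(T(r+2,r)\big)=\frac{4}{r+2}. \]
   Context: $\mathcal{G}(\Delta,\omega)$ denotes the class of finite simple graphs $G$ with maximum degree $\Delta(G)\le\Delta$ and clique number $\omega(G)\le\omega$. $k_t(G)$ is the number of copies of $K_t$ in $G$ and $\rho_t(G)=k_t(G)/|V(G)|$. $f_t(\Delta,\omega)=\sup\{\rho_t(G): G\in\mathcal{G}(\Delta,\omega),\ |V(G)|\ge 1\}$. $T(n,r)$ denotes the $r$-partite Turán graph on $n$ vertices; for $r\ge 4$, $T(r+2,r)$ has $r-2$ parts of size $1$ and two parts of size $2$. *)

From HB Require Import structures.
From mathcomp Require Import all_boot all_order all_algebra.
Set Implicit Arguments. Unset Strict Implicit. Unset Printing Implicit Defensive.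
Import Order.TTheory GRing.Theory Num.Theory.

Definition simple_graph (V : finType) (e : rel V) : Prop :=
  symmetric e /\ irreflexive e.

Definition is_clique (V : finType) (e : rel V) (S : {set V}) : bool :=
  [forall x in S, forall y in S, (x != y) ==> e x y].

Definition degree (V : finType) (e : rel V) (v : V) : nat := #|[set u | e v u]|.

Definition max_degree_le (V : finType) (e : rel V) (D : nat) : Prop :=
  forall v : V, degree e v <= D.

Definition clique_number_le (V : finType) (e : rel V) (w : nat) : Prop :=
  forall S : {set V}, is_clique e S -> #|S| <= w.

Definition kcount (V : finType) (e : rel V) (t : nat) : nat :=
  #|[set S : {set V} | (#|S| == t) && is_clique e S]|.

Definition rho (V : finType) (e : rel V) (t : nat) : rat :=
  ((kcount e t)%:R / #|V|%:R)%R.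

Definition in_class (V : finType) (e : rel V) (D w : nat) : Prop :=
  simple_graph e /\ max_degree_le e D /\ clique_number_le e w.

Definition is_f (t D w : nat) (x : rat) : Prop :=
  (forall (V : finType) (e : rel V),
      in_class e D w -> 0 < #|V| -> (rho e t <= x)%R) /\
  (forall y : rat,
      (forall (V : finType) (e : rel V),
          in_class e D w -> 0 < #|V| -> (rho e t <= y)%R) -> (x <= y)%R).

(* Turán graph T(n, r) on 'I_n: vertex i lies in part (i mod r); parts have
   sizes differing by at most one; two vertices adjacent iff in different parts. *)
Definition turan_rel (n r : nat) : rel 'I_n :=
  fun i j => (i %% r != j %% r)%N.
Arguments turan_rel n r : clear implicits.

(* Weighted double counting.  Let k(v) be the number of r-cliques through v;
   then the sum over all r-cliques K of the weights w(K) = \sum_(v in K) 1/k(v)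
   is at most |V|.  In a graph with maximum degree r + 1 and no (r+1)-clique,
   every vertex of an r-clique K has at most two neighbours outside K, and an
   r-clique through v is determined by its part outside K, so k(v) <= 4.
   When r >= 4 a finer analysis shows that either some vertex of K lies in no
   other r-clique or two vertices of K lie in at most two r-cliques each, so
   w(K) >= r/4 + 1/2 and k_r(G) <= 4 |V| / (r + 2).  The Turan graph
   T(r+2, r) has four r-cliques on r + 2 vertices. *)

From HB Require Import structures.
From mathcomp Require Import all_boot all_order all_algebra.
From mathcomp Require Import zify lra.
Import Order.TTheory GRing.Theory Num.Theory.
Set Implicit Arguments. Unset Strict Implicit. Unset Printing Implicit Defensive.

Section Hypergraph.

Variable V : finType.
Implicit Types (F : {set {set V}}) (S : {set V}) (v : V).

Definition star F v : {set {set V}} := [set S in F | v \in S].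

Definition hyper_degree F v : nat := #|star F v|.

Lemma in_star F v S : (S \in star F v) = (S \in F) && (v \in S).
Proof. by rewrite inE. Qed.

Lemma hyper_degree_gt0 F S v : S \in F -> v \in S -> 0 < hyper_degree F v.
Proof. by move=> SF vS; apply/card_gt0P; exists S; rewrite in_star SF vS. Qed.

Lemma hyper_degree_ge2 F S v : S \in F -> v \in S -> 2 <= hyper_degree F v ->
  exists2 S', S' \in F & (v \in S') && (S' != S).
Proof.
move=> SF vS; rewrite /hyper_degree (cardsD1 S) in_star SF vS ltnS.
by case/card_gt0P=> S'; rewrite !inE => /and3P[S'S S'F vS']; exists S'; rewrite ?vS'.
Qed.

Local Open Scope ring_scope.

Lemma card_mul_le_sum_inv_hyper_degree (R : numFieldType) F (c : R) :
  (forall S, S \in F -> c <= \sum_(v in S) (hyper_degree F v)%:R^-1) ->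
  #|F|%:R * c <= #|V|%:R.
Proof.
move=> Fc; rewrite mulr_natl -sumr_const.
apply: le_trans (ler_sum _ Fc) _.
rewrite (exchange_big_dep xpredT) //=.
have -> : #|V|%:R = \sum_(v : V) (1 : R) by rewrite sumr_const.
apply: ler_sum => v _; rewrite (eq_bigl (mem (star F v))); last first.
  by move=> S; rewrite /= in_star.
rewrite sumr_const /hyper_degree; case: #|_| => [|d]; first by rewrite mulr0n.
by rewrite -[X in X <= _]mulr_natr mulVf // pnatr_eq0.
Qed.

End Hypergraph.

Lemma ler_inv_natr (R : numFieldType) (m n : nat) :
  0 < n -> n <= m -> ((m%:R)^-1 <= (n%:R)^-1 :> R)%R.
Proof.
move=> n0 nm; rewrite lef_pV2 ?ler_nat // posrE ltr0n //.
exact: leq_trans nm.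
Qed.

Definition cliques (V : finType) (e : rel V) (t : nat) : {set {set V}} :=
  [set S : {set V} | (#|S| == t) && is_clique e S].

Definition out_nbhd (V : finType) (e : rel V) (K : {set V}) (w : V) : {set V} :=
  [set u | e w u] :\: K.

Lemma cliqueP (V : finType) (e : rel V) (S : {set V}) :
  reflect {in S &, forall x y, x != y -> e x y} (is_clique e S).
Proof.
apply: (iffP forall_inP) => [Scl x y xS yS | Scl x xS].
  exact/implyP/(forall_inP (Scl x xS)).
by apply/forall_inP => y yS; apply/implyP; apply: Scl.
Qed.

Lemma cardsD_sym (T : finType) (A B : {set T}) :
  #|A| = #|B| -> #|A :\: B| = #|B :\: A|.
Proof. by move=> AB; rewrite !cardsD setIC AB. Qed.

Lemma cardsU_ge2 (T : finType) (A B : {set T}) :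
  A != B -> 0 < #|A| -> 0 < #|B| -> 2 <= #|A :|: B|.
Proof.
move=> AB A0 B0; rewrite leqNgt; apply: contra AB => U1.
have eqU (X : {set T}) : 0 < #|X| -> X \subset A :|: B -> X = A :|: B.
  by move=> X0 XU; apply/eqP; rewrite eqEcard XU; lia.
by rewrite (eqU A) ?subsetUl // -(eqU B) ?subsetUr.
Qed.

Lemma memD_set1 (T : finType) (A B : {set T}) (s w : T) :
  A :\: B = [set s] -> w \in A -> w != s -> w \in B.
Proof.
move=> ABs wA; apply: contraR => wB.
have : w \in A :\: B by rewrite inE wB wA.
by rewrite ABs inE.
Qed.

Lemma setD_sub_out_nbhd (V : finType) (e : rel V) (K D : {set V}) (w : V) :
  is_clique e D -> w \in D -> w \in K -> D :\: K \subset out_nbhd e K w.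
Proof.
move=> /cliqueP Dcl wD wK; apply/subsetP => x; rewrite !inE => /andP[xK xD].
by rewrite xK Dcl //; apply: contraNneq xK => <-.
Qed.

Section MaximumCliques.

Variables (V : finType) (e : rel V) (r : nat).
Hypothesis e_sym : symmetric e.
Hypothesis deg_le : max_degree_le e r.+1.
Hypothesis omega_le : clique_number_le e r.
Hypothesis r_ge4 : 4 <= r.

Local Notation rcliques := (cliques e r).
Local Notation k := (hyper_degree rcliques).

Lemma rcliquesP (S : {set V}) : reflect (#|S| = r /\ is_clique e S) (S \in rcliques).
Proof. by rewrite inE; apply: (iffP andP) => -[cS Scl]; split=> //; apply/eqP. Qed.

Lemma rclique_not_extendable (X : {set V}) (y : V) :
  X \in rcliques -> y \notin X -> ~ {in X, forall x, e y x}.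
Proof.
case/rcliquesP=> cX /cliqueP Xcl yX yX_adj.
suff /omega_le : is_clique e (y |: X) by rewrite cardsU1 yX cX add1n ltnn.
apply/cliqueP => a b; rewrite !inE => /predU1P[->|aX] /predU1P[->|bX];
  rewrite ?eqxx // => ab.
- exact: yX_adj.
- by rewrite e_sym yX_adj.
- exact: Xcl.
Qed.

Section OneClique.

Variable K : {set V}.
Hypothesis K_rcl : K \in rcliques.

Local Notation out := (out_nbhd e K).

Lemma card_out_nbhd (w : V) : w \in K -> #|out w| <= 2.
Proof.
move=> wK; have /rcliquesP[cK /cliqueP Kcl] := K_rcl.
have sub : K :\ w \subset [set u | e w u] :&: K.
  by apply/subsetP => x; rewrite !inE => /andP[xw xK]; rewrite xK andbT Kcl // eq_sym.
have := subset_leq_card sub; have := deg_le w; rewrite /degree.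
have := cardsID K [set u | e w u]; have := cardsD1 w K; rewrite wK cK /out_nbhd.
by move=> h1 h2 h3 h4; clear -h1 h2 h3 h4; lia.
Qed.

Lemma rclique_setD_inj (C D : {set V}) :
  C \in rcliques -> D \in rcliques -> C :\: K = D :\: K -> C = D.
Proof.
move=> C_rcl D_rcl CD; have /rcliquesP[cK /cliqueP Kcl] := K_rcl.
have /rcliquesP[cC /cliqueP Ccl] := C_rcl; have /rcliquesP[cD _] := D_rcl.
have memK X Y x : X :\: K = Y :\: K -> x \in X -> x \notin Y -> x \in K.
  move=> XY xX; apply: contraR => xK.
  have : x \in X :\: K by rewrite inE xK xX.
  by rewrite XY inE => /andP[].
suff CsubD : C \subset D by apply/eqP; rewrite eqEcard CsubD cC cD leqnn.
apply/subsetP => x xC; apply: contraT => xD; exfalso.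
apply: (rclique_not_extendable D_rcl xD) => y yD.
have [yC|yC] := boolP (y \in C); first by apply: Ccl => //; apply: contraNneq xD => ->.
by apply: Kcl; [exact: memK CD xC xD | exact: memK (esym CD) yD yC
               | apply: contraNneq yC => <-].
Qed.

Lemma hyper_degree_le4 (v : V) : v \in K -> k v <= 4.
Proof.
move=> vK; set A := star rcliques v.
have inj : {in A &, injective (fun S => S :\: K)}.
  by move=> C D; rewrite !in_star => /andP[C_rcl _] /andP[D_rcl _]; apply: rclique_setD_inj.
have sub : [set S :\: K | S in A] \subset powerset (out v).
  apply/subsetP => X /imsetP[S]; rewrite in_star => /andP[/rcliquesP[_ Scl] vS] ->.
  by rewrite inE setD_sub_out_nbhd.
rewrite /hyper_degree -/A -(card_in_imset inj); apply: leq_trans (subset_leq_card sub) _.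
by rewrite card_powerset (@leq_pexp2l 2 _ 2) ?card_out_nbhd.
Qed.

Lemma rclique_setD_gt0 (D : {set V}) : D \in rcliques -> D != K -> 0 < #|D :\: K|.
Proof.
case/rcliquesP=> cD _ DK; have /rcliquesP[cK _] := K_rcl.
by rewrite card_gt0 setD_eq0; apply: contraNN DK => DsubK; rewrite eqEcard DsubK cK cD leqnn.
Qed.

Lemma out_nbhd_two_rcliques (D1 D2 : {set V}) (u : V) :
  D1 \in rcliques -> D2 \in rcliques -> D1 != K -> D2 != K -> D1 != D2 ->
  u \in K -> u \in D1 -> u \in D2 ->
  out u = D1 :\: K :|: D2 :\: K /\ #|out u| = 2.
Proof.
move=> D1_rcl D2_rcl D1K D2K D12 uK uD1 uD2.
have /rcliquesP[_ D1cl] := D1_rcl; have /rcliquesP[_ D2cl] := D2_rcl.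
have U2 : 2 <= #|D1 :\: K :|: D2 :\: K|.
  apply: cardsU_ge2; rewrite ?rclique_setD_gt0 //.
  by apply: contraNneq D12 => /rclique_setD_inj->.
have sub : D1 :\: K :|: D2 :\: K \subset out u.
  by rewrite subUset !setD_sub_out_nbhd.
have cu := card_out_nbhd uK.
have eq_out : out u = D1 :\: K :|: D2 :\: K.
  by apply/esym/eqP; rewrite eqEcard sub; clear -U2 cu; lia.
by split=> //; apply/eqP; rewrite eqn_leq cu eq_out U2.
Qed.

Lemma rclique_setD_card1 (D : {set V}) : D \in rcliques -> #|D :\: K| = 1 ->
  exists t s, [/\ D :\: K = [set t], K :\: D = [set s] & ~~ e t s].
Proof.
move=> D_rcl c1; have /rcliquesP[cK _] := K_rcl; have /rcliquesP[cD /cliqueP Dcl] := D_rcl.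
have /cards1P[t Dt] : #|D :\: K| == 1 by rewrite c1.
have /cards1P[s Ks] : #|K :\: D| == 1 by rewrite -cardsD_sym ?c1 ?cK.
exists t, s; split=> //; apply/negP => ets.
have : t \in D :\: K by rewrite Dt set11.
rewrite inE => /andP[tK tD]; apply: (rclique_not_extendable K_rcl tK) => x xK.
have [->//|xs] := eqVneq x s.
by apply: Dcl => //; [exact: memD_set1 Ks xK xs | apply: contraNneq tK => ->].
Qed.

Section MissingVertex.

Variables (C : {set V}) (u w0 : V).
Hypotheses (C_rcl : C \in rcliques) (uK : u \in K) (uC : u \notin C).
Hypotheses (w0K : w0 \in K) (w0C : w0 \in C).

Lemma out_nbhd_not_subset (w : V) :
  w \in K -> w \in C -> #|out u| = 2 -> ~~ (out u \subset out w).
Proof.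
move=> wK wC cu; apply/negP => sub.
have /rcliquesP[_ /cliqueP Kcl] := K_rcl; have /rcliquesP[_ Ccl] := C_rcl.
have eq_out : out u = out w by apply/eqP; rewrite eqEcard sub cu card_out_nbhd.
apply: (rclique_not_extendable C_rcl uC) => x xC.
have [xK|xK] := boolP (x \in K); first by apply: Kcl => //; apply: contraNneq uC => ->.
have : x \in out w by apply: (subsetP (setD_sub_out_nbhd Ccl wC wK)); rewrite inE xK.
by rewrite -eq_out !inE => /andP[].
Qed.

Lemma card_common_setD1_ge2 (D : {set V}) (t s : V) :
  D \in rcliques -> D :\: K = [set t] -> K :\: D = [set s] -> ~~ e t s ->
  2 <= #|(K :&: C) :\ s|.
Proof.
move=> D_rcl Dt Ks nts; have /rcliquesP[cC Ccl] := C_rcl; have /rcliquesP[_ Dcl] := D_rcl.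
have /setDP[tD tK] : t \in D :\: K by rewrite Dt set11.
have /setDP[sK _] : s \in K :\: D by rewrite Ks set11.
have cCK : #|C :\: K| <= 2.
  exact: leq_trans (subset_leq_card (setD_sub_out_nbhd Ccl w0C w0K)) (card_out_nbhd w0K).
have cKC : #|K :&: C| + #|C :\: K| = r by rewrite setIC cardsID.
(* If t is in C then s is not; otherwise a vertex w of (K :&: C) :\ s, which
   lies in D, sees t and all of C :\: K outside K, so #|C :\: K| <= 1. *)
have := cardsD1 s (K :&: C); rewrite inE sK /=.
have [tC|tC] := boolP (t \in C).
  suff -> : s \in C = false by rewrite add0n => <-; clear -cCK cKC r_ge4; lia.
  apply: contraNF nts => sC; move/cliqueP: Ccl => Ccl.
  by apply: Ccl => //; apply: contraNneq tK => ->.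
move=> cKCs; have : 0 < #|(K :&: C) :\ s| by clear -cCK cKC cKCs r_ge4; lia.
case/card_gt0P => w; rewrite !inE => /and3P[ws wK wC].
have sub : t |: (C :\: K) \subset out w.
  rewrite subUset setD_sub_out_nbhd // sub1set andbT.
  by apply: (subsetP (setD_sub_out_nbhd Dcl (memD_set1 Ks wK ws) wK)); rewrite inE tK.
have := leq_trans (subset_leq_card sub) (card_out_nbhd wK).
rewrite cardsU1 inE (negbTE tC) andbF /= => cCK1.
by clear -cCK1 cKC cKCs r_ge4; lia.
Qed.

Lemma split_out_nbhd_absurd (D1 D2 : {set V}) :
  D1 \in rcliques -> D2 \in rcliques -> u \in D2 ->
  out u = D1 :\: K :|: D2 :\: K -> #|out u| = 2 -> #|D1 :\: K| = 1 -> False.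
Proof.
move=> D1_rcl D2_rcl uD2 out_u cu c1.
have [t [s [D1t KD1 nts]]] := rclique_setD_card1 D1_rcl c1.
(* The vertices of (K :&: C) :\ s lie in D1, hence not in D2; as there are at
   least two of them, D2 :\: K must be all of out u, so both t and s lie in D2. *)
have cP := card_common_setD1_ge2 D1_rcl D1t KD1 nts.
have /rcliquesP[cK _] := K_rcl; have /rcliquesP[_ D1cl] := D1_rcl.
have /rcliquesP[cD2 D2cl] := D2_rcl.
have /setDP[sK _] : s \in K :\: D1 by rewrite KD1 set11.
have /setDP[_ tK] : t \in D1 :\: K by rewrite D1t set11.
have ts : t != s by apply: contraNneq tK => ->.
have notD2 w : w \in K -> w \in C -> w != s -> w \notin D2.
  move=> wK wC ws; apply/negP => wD2; apply/negP: (out_nbhd_not_subset wK wC cu).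
  by rewrite out_u subUset !setD_sub_out_nbhd ?(memD_set1 KD1).
have PD2 : (K :&: C) :\ s \subset K :\: D2.
  by apply/subsetP => w; rewrite !inE => /and3P[ws wK wC]; rewrite wK notD2.
have cKD2 : #|K :\: D2| = #|D2 :\: K| by apply: cardsD_sym; rewrite cK cD2.
have D2u : D2 :\: K \subset out u by rewrite out_u subsetUr.
have := subset_leq_card D2u; rewrite cu => cD2K.
have eP : (K :&: C) :\ s = K :\: D2.
  by apply/eqP; rewrite eqEcard PD2 /=; clear -cP cKD2 cD2K; lia.
have sD2 : s \in D2.
  apply: contraT => sD2; have : s \in K :\: D2 by rewrite inE sD2 sK.
  by rewrite -eP !inE eqxx.
have /setDP[tD2 _] : t \in D2 :\: K.
  have /eqP -> : D2 :\: K == out u by rewrite eqEcard D2u cu -cKD2 -eP.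
  by rewrite out_u D1t !inE eqxx.
by move/cliqueP: D2cl => D2cl; rewrite D2cl in nts.
Qed.

Lemma rcliques_through_eq (D1 D2 : {set V}) :
  D1 \in rcliques -> D2 \in rcliques -> D1 != K -> D2 != K ->
  u \in D1 -> u \in D2 -> D1 = D2.
Proof.
move=> D1_rcl D2_rcl D1K D2K uD1 uD2; apply/eqP/negPn/negP => D12.
have [out_u cu] := out_nbhd_two_rcliques D1_rcl D2_rcl D1K D2K D12 uK uD1 uD2.
have [c1|c1] := eqVneq #|D1 :\: K| 1.
  exact: split_out_nbhd_absurd D1_rcl D2_rcl uD2 out_u cu c1.
have [c2|c2] := eqVneq #|D2 :\: K| 1.
  by rewrite setUC in out_u; exact: split_out_nbhd_absurd D2_rcl D1_rcl uD1 out_u cu c2.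
have eq_out D : D \in rcliques -> D != K -> u \in D -> #|D :\: K| != 1 -> D :\: K = out u.
  move=> D_rcl DK uD cD; have /rcliquesP[_ Dcl] := D_rcl.
  have sub := setD_sub_out_nbhd Dcl uD uK; have D0 := rclique_setD_gt0 D_rcl DK.
  have := subset_leq_card sub; rewrite cu => cD2.
  by apply/eqP; rewrite eqEcard sub cu; clear -cD D0 cD2; lia.
have eqD : D1 :\: K = D2 :\: K.
  by rewrite (eq_out D1) // (eq_out D2).
by rewrite (rclique_setD_inj D1_rcl D2_rcl eqD) eqxx in D12.
Qed.

Lemma hyper_degree_le2 : k u <= 2.
Proof.
rewrite /hyper_degree (cardsD1 K) in_star K_rcl uK ltnS.
apply/card_le1_eqP => D1 D2; rewrite !in_setD1 !in_star.
move=> /and3P[D1K D1_rcl uD1] /and3P[D2K D2_rcl uD2].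
exact: rcliques_through_eq.
Qed.

End MissingVertex.

Lemma rclique_small_degrees :
  (exists2 v, v \in K & k v = 1) \/
  exists v1 v2, [/\ v1 \in K, v2 \in K, v1 != v2, k v1 <= 2 & k v2 <= 2].
Proof.
have [/exists_inP[v vK /eqP kv1]|] := boolP [exists v in K, k v == 1].
  by left; exists v.
rewrite negb_exists_in => /forall_inP k_neq1; right.
have k_ge2 v : v \in K -> 2 <= k v.
  by move=> vK; have := hyper_degree_gt0 K_rcl vK; have := k_neq1 v vK; lia.
have other v : v \in K -> exists2 D, D \in rcliques & (v \in D) && (D != K).
  by move=> vK; apply: hyper_degree_ge2 K_rcl vK (k_ge2 v vK).
have missing D : D \in rcliques -> D != K -> exists2 x, x \in K & x \notin D.
  move=> D_rcl DK; have /rcliquesP[cD _] := D_rcl; have /rcliquesP[cK _] := K_rcl.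
  apply/subsetPn; rewrite -setD_eq0 -cards_eq0 -lt0n cardsD_sym ?cK ?cD //.
  exact: rclique_setD_gt0.
have [v0 v0K] : exists v0, v0 \in K.
  by apply/card_gt0P; have /rcliquesP[-> _] := K_rcl; lia.
have [D0 D0_rcl /andP[v0D0 D0K]] := other v0 v0K.
have [u uK uD0] := missing D0 D0_rcl D0K.
have [D1 D1_rcl /andP[uD1 D1K]] := other u uK.
have [u' u'K u'D1] := missing D1 D1_rcl D1K.
exists u, u'; split=> //.
- by apply: contraNneq u'D1 => <-.
- exact: hyper_degree_le2 D0_rcl uK uD0 v0K v0D0.
- exact: hyper_degree_le2 D1_rcl u'K u'D1 uK uD1.
Qed.

Local Open Scope ring_scope.

Lemma rclique_inv_degree_sum :
  (r + 2)%N%:R / 4 <= \sum_(v in K) (k v)%:R^-1 :> rat.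
Proof.
have /rcliquesP[cK _] := K_rcl.
pose g v : rat := (k v)%:R^-1 - 4%:R^-1.
have gK v : v \in K -> 0 <= g v.
  by move=> vK; rewrite subr_ge0 ler_inv_natr ?hyper_degree_le4 ?(hyper_degree_gt0 K_rcl vK).
have sum_g : \sum_(v in K) (k v)%:R^-1 = \sum_(v in K) g v + r%:R / 4.
  by rewrite sumrB sumr_const cK; lra.
suff : 1 / 2 <= \sum_(v in K) g v by rewrite sum_g natrD; lra.
(* [g] is 3/4 at a vertex in a single r-clique, at least 1/4 at one in at most two. *)
case: rclique_small_degrees => [[v vK kv1] | [v1 [v2 [v1K v2K v12 kv1 kv2]]]].
- rewrite (bigD1 v) //=.
  have : 0 <= \sum_(w in K | w != v) g w by apply: sumr_ge0 => w /andP[wK _]; exact: gK.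
  by rewrite /g kv1; lra.
- rewrite (bigD1 v1) //= (bigD1 v2) /=; last by rewrite v2K eq_sym.
  have : 0 <= \sum_(w | (w \in K) && (w != v1) && (w != v2)) g w.
    by apply: sumr_ge0 => w /andP[/andP[wK _] _]; exact: gK.
  have g_half w : w \in K -> (k w <= 2)%N -> 1 / 4 <= g w.
    move=> wK kw; have := @ler_inv_natr rat _ _ (hyper_degree_gt0 K_rcl wK) kw.
    by rewrite /g; lra.
  by have := g_half v1 v1K kv1; have := g_half v2 v2K kv2; lra.
Qed.

End OneClique.

Lemma rho_le : (0 < #|V|)%N -> (rho e r <= 4%:R / (r + 2)%N%:R)%R.
Proof.
move=> V0; have := card_mul_le_sum_inv_hyper_degree rclique_inv_degree_sum.
rewrite /rho (_ : kcount e r = #|rcliques|) // mulrA ler_pdivrMr ?ltr0n ?addn2 // => H.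
by rewrite ler_pdivrMr ?ltr0n // mulrAC ler_pdivlMr ?ltr0n ?addn2 // [(4 * _)%R]mulrC.
Qed.

End MaximumCliques.

Lemma modn_lt_add2 (r i : nat) : 2 <= r -> i < r + 2 -> i %% r = if i < r then i else i - r.
Proof.
move=> r2 ir; case: ltnP => [/modn_small //|ri].
by rewrite -{1}(subnK ri) modnDr modn_small //; lia.
Qed.

Section Turan.

Variable r : nat.
Hypothesis r_ge2 : 2 <= r.

Local Notation T := (turan_rel (r + 2) r).

Lemma turan_rel_mod_eq (i j : 'I_(r + 2)) : i != j -> ~~ T i j ->
  (i < 2) && (j == r + i :> nat) || (j < 2) && (i == r + j :> nat).
Proof.
rewrite /turan_rel negbK -val_eqE /=; move: (ltn_ord i) (ltn_ord j) => ir jr ij.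
by rewrite !modn_lt_add2 //; case: (ltnP i r) => ?; case: (ltnP j r) => ? /=; lia.
Qed.

Lemma turan_in_class : in_class T r.+1 r.
Proof.
have r0 : 0 < r by exact: ltnW.
split; [split | split].
- by move=> i j; rewrite /turan_rel eq_sym.
- by move=> i; rewrite /turan_rel eqxx.
- move=> v; apply: leq_trans (_ : #|[set~ v]| <= _); last by rewrite cardsC1 card_ord addn2.
  apply/subset_leq_card/subsetP => u; rewrite !inE.
  by apply: contraTneq => ->; rewrite /turan_rel eqxx.
- move=> S /cliqueP Scl; pose part (i : 'I_(r + 2)) : 'I_r := Ordinal (ltn_pmod i r0).
  have part_inj : {in S &, injective part}.
    move=> i j iS jS /(congr1 val) /= ij; apply/eqP/negPn/negP => /(Scl i j iS jS).
    by rewrite /turan_rel ij eqxx.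
  by rewrite -(card_in_imset part_inj) (leq_trans (max_card _)) ?card_ord.
Qed.

(* The parts of T(r+2, r) are {0, r}, {1, r+1} and the singletons {i} with
   2 <= i < r; removing one vertex from each of the first two parts leaves an
   r-clique. *)
Definition turan_omit (b : {ffun 'I_2 -> bool}) (k : 'I_2) : 'I_(r + 2) :=
  if b k then rshift r k else widen_ord (leq_addl r 2) k.

Definition turan_rclique (b : {ffun 'I_2 -> bool}) : {set 'I_(r + 2)} :=
  ~: [set turan_omit b k | k : 'I_2].

Lemma val_turan_omit b k : turan_omit b k = (if b k then r + k else k) :> nat.
Proof. by rewrite /turan_omit; case: (b k). Qed.

Lemma turan_omit_mod b k : turan_omit b k %% r = k.
Proof.
have k_lt_r : k < r by exact: leq_trans (ltn_ord k) r_ge2.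
by rewrite val_turan_omit; case: (b k); rewrite ?modnDl modn_small.
Qed.

Lemma turan_omit_inj b : injective (turan_omit b).
Proof.
move=> k k' /(congr1 (fun i : 'I_(r + 2) => i %% r)).
by rewrite !turan_omit_mod => /val_inj.
Qed.

Lemma turan_rclique_in b : turan_rclique b \in cliques T r.
Proof.
rewrite inE; apply/andP; split.
  by rewrite /turan_rclique cardsCs setCK (card_imset _ (@turan_omit_inj b)) !card_ord addnK.
set A := [set turan_omit b k | k : 'I_2].
have part_hit (x y : 'I_(r + 2)) :
    x \notin A -> y \notin A -> x < 2 -> y = r + x :> nat -> False.
  move=> xA yA x2 yx; pose k : 'I_2 := Ordinal x2.
  have : turan_omit b k \in A by apply: imset_f.
  have -> : turan_omit b k = if b k then y else x.
    by apply: ord_inj; rewrite val_turan_omit; case: (b k).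
  by case: (b k); apply/negP.
apply/cliqueP => i j; rewrite !inE => iA jA ij; apply: contraT => /(turan_rel_mod_eq ij).
case/orP=> /andP[lt2 /eqP eq]; exfalso.
- exact: part_hit iA jA lt2 eq.
- exact: part_hit jA iA lt2 eq.
Qed.

Lemma turan_rclique_inj : injective turan_rclique.
Proof.
move=> b b' /setC_inj eq_omit; apply/ffunP => k.
have : turan_omit b k \in [set turan_omit b' k | k : 'I_2] by rewrite -eq_omit imset_f.
case/imsetP => k' _ /[dup] /(congr1 (fun i : 'I_(r + 2) => i %% r)).
rewrite !turan_omit_mod => /val_inj <- /(congr1 (@nat_of_ord _)); rewrite !val_turan_omit.
by case: (b k); case: (b' k) => //=; lia.
Qed.

Lemma turan_kcount_ge4 : 4 <= kcount T r.
Proof.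
have sub : [set turan_rclique b | b : {ffun 'I_2 -> bool}] \subset cliques T r.
  by apply/subsetP => S /imsetP[b _ ->]; exact: turan_rclique_in.
have := subset_leq_card sub.
by rewrite (card_imset _ turan_rclique_inj) card_ffun card_bool !card_ord.
Qed.

End Turan.

Theorem mainTheorem13 (r : nat) (hr : (4 <= r)%N) :
  is_f r r.+1 r (4%:R / (r + 2)%N%:R : rat)%R /\
  rho (turan_rel (r + 2) r) r = (4%:R / (r + 2)%N%:R : rat)%R.
Proof.
have r_ge2 : 2 <= r by exact: leq_trans hr.
have T_class := turan_in_class r_ge2.
have upper (V : finType) (e : rel V) :
    in_class e r.+1 r -> 0 < #|V| -> (rho e r <= 4%:R / (r + 2)%N%:R)%R.
  by case=> -[e_sym _] [deg_le omega_le]; exact: rho_le.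
(* The upper bound applied to T(r+2, r) itself turns its four r-cliques into
   an equality. *)
have r2_gt0 : 0 < r + 2 by rewrite addn2.
have T_rho : rho (turan_rel (r + 2) r) r = (4%:R / (r + 2)%N%:R)%R.
  apply/le_anti; rewrite upper ?card_ord //=.
  by rewrite /rho card_ord ler_pM2r ?invr_gt0 ?ltr0n // ler_nat; exact: turan_kcount_ge4.
split=> //; split=> [|y y_ub]; first exact: upper.
by rewrite -T_rho; apply: y_ub; rewrite ?card_ord.
Qed.
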